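(* Let $Y$ be the quotient of $(\mathbb R_{>0})^s\times E$ by a non-degenerate twisted diagonal action of $G=\mathbb Z^s\ltimes\mathcal L$ with data $(\xi_1,\dots,\xi_s)$, $\mathcal L$, $(A_1,\dots,A_s)$, and let $\mu_i\in GL(k,\mathbb Z)$ be the matrix of $A_i$ in the basis $\mathcal B$. Then (1) there is a fibration $p:Y\to\mathbb T^s$ with fiber $\mathbb T^k$ and monodromy matrices $\mu_1,\dots,\mu_s$; (2) this fibration admits a cross-section.
   Context: $E$ is a real vector space of dimension $k$ with basis $\mathcal B$; $\mathcal L$ is the free abelian group generated by $\mathcal B$. $\xi_1,\dots,\xi_s\in(\mathbb R_{>0})^s$, $\xi_i=(\xi_i^{(1)},\dots,\xi_i^{(s)})$; $A_1,\dots,A_s\in GL(E)$ commute pairwise and each restricts to an automorphism of $\mathcal L$. $G=\mathbb Z^s\ltimes\mathcal L$ with the $i$-th generator $\tau_i$ acting on $\mathcal L$ by $A_i$. The twisted diagonal action on $(\mathbb R_{>0})^s\times E$: $\mathcal L$ acts by translations on $E$, and $\tau_i(x_1,\dots,x_s,v)=(\xi_i^{(1)}x_1,\dots,\xi_i^{(s)}x_s,A_i(v))$. Non-degenerate means the vectors $(\log\xi_i^{(1)},\dots,\log\xi_i^{(s)})$, $1\le i\le s$, form a basis of $\mathbb R^s$. *)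

From HB Require Import structures.
From Stdlib Require Import Relation_Operators.
From mathcomp Require Import all_boot all_order all_algebra.
From mathcomp Require Import all_classical all_reals all_analysis.

Set Implicit Arguments. Unset Strict Implicit. Unset Printing Implicit Defensive.
Import Order.TTheory GRing.Theory Num.Theory.
Import numFieldNormedType.Exports.
Local Open Scope classical_set_scope.
Local Open Scope ring_scope.

(* Conventions: E is identified with R^k (column vectors 'cV[R]_k) through
   the basis B, so that the lattice L is 'cV[int]_k and A_i is the matrix
   mu i acting by v |-> mu i *m v.  (R_{>0})^s is the open positive orthant
   of 'cV[R]_s. *)

Definition is_quotient_map {X Y : topologicalType} (D : set X)
    (rel : X -> X -> Prop) (q : X -> Y) : Prop :=
  [/\ (forall y, exists x, D x /\ q x = y),
      (forall x x', D x -> D x' -> (q x = q x' <-> rel x x')) &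
      (forall U : set Y,
          open U <-> exists V : set X, open V /\ D `&` (q @^-1` U) = D `&` V)].

Definition intmx {R : realType} {m n : nat} (M : 'M[int]_(m, n)) : 'M[R]_(m, n) :=
  map_mx (fun z : int => z%:~R) M.

Definition lattice_rel {R : realType} (n : nat) (x x' : 'cV[R]_n) : Prop :=
  exists l : 'cV[int]_n, x' = x + intmx l.

Definition pos_part {R : realType} (s k : nat) : set ('cV[R]_s * 'cV[R]_k) :=
  [set z | forall j : 'I_s, 0 < (z.1 : 'cV[R]_s) j 0].

Definition tau {R : realType} {s k : nat} (xi : 'I_s -> 'I_s -> R)
    (mu : 'I_s -> 'M[int]_k) (i : 'I_s) (z : 'cV[R]_s * 'cV[R]_k)
    : 'cV[R]_s * 'cV[R]_k :=
  (\col_j (xi i j * z.1 j 0), intmx (mu i) *m z.2).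

Definition gen_step {R : realType} {s k : nat} (xi : 'I_s -> 'I_s -> R)
    (mu : 'I_s -> 'M[int]_k) (z z' : 'cV[R]_s * 'cV[R]_k) : Prop :=
  (exists i, z' = tau xi mu i z) \/
  (exists l : 'cV[int]_k, z' = (z.1, z.2 + intmx l)).

Definition G_orbit_rel {R : realType} {s k : nat} (xi : 'I_s -> 'I_s -> R)
    (mu : 'I_s -> 'M[int]_k) : 'cV[R]_s * 'cV[R]_k -> 'cV[R]_s * 'cV[R]_k -> Prop :=
  clos_refl_sym_trans _ (gen_step xi mu).

Definition unit_interval {R : realType} : set R := [set t | 0 <= t <= 1].

Definition fiber_bundle {B F Y : topologicalType} (p : Y -> B) : Prop :=
  continuous p /\ (forall b, exists y, p y = b) /\
  forall b : B, exists U : set B, [/\ open U, U b &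
    exists (h : Y -> F) (g : B * F -> Y),
      [/\ {within p @^-1` U, continuous h},
          {within U `*` [set: F], continuous g},
          (forall y, U (p y) -> g (p y, h y) = y) &
          (forall c f, U c -> p (g (c, f)) = c /\ h (g (c, f)) = f)]].

Definition fiber_identification {B F Y : topologicalType} (p : Y -> B) (b0 : B)
    (phi : F -> Y) (phiinv : Y -> F) : Prop :=
  [/\ continuous phi,
      {within p @^-1` [set b0], continuous phiinv},
      (forall z, p (phi z) = b0 /\ phiinv (phi z) = z) &
      (forall y, p y = b0 -> phi (phiinv y) = y)].

(* Convention: Phi lifts gamma with Phi(1,.) = phi; then the monodromy map is
   phiinv o Phi(0,.), required to be homotopic to L. *)
Definition has_monodromy {R : realType} {B F Y : topologicalType} (p : Y -> B)
    (gamma : R -> B) (phi : F -> Y) (phiinv : Y -> F) (L : F -> F) : Prop :=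
  exists Phi : R * F -> Y,
    [/\ {within unit_interval `*` [set: F], continuous Phi},
        (forall t z, unit_interval t -> p (Phi (t, z)) = gamma t),
        (forall z, Phi (1, z) = phi z) &
        exists H : R * F -> F,
          [/\ {within unit_interval `*` [set: F], continuous H},
              (forall z, H (0, z) = phiinv (Phi (0, z))) &
              (forall z, H (1, z) = L z)]].

Definition std_loop {R : realType} {s : nat} {T : topologicalType}
    (pis : 'cV[R]_s -> T) (i : 'I_s) (t : R) : T :=
  pis (t *: (delta_mx i 0 : 'cV[R]_s)).

(* Write the points of the orthant as [x = exp_point c], i.e.
   [x_j = prod_i (xi_i^(j))^(c_i)]; non-degeneracy makes [c] a global coordinate, in
   which [tau_i] is the translation by [e_i]. Hence [[x, v] |-> c mod Z^s] is a
   well-defined projection onto [T^s]. Over the image of the open unit cube around [c0],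
   each orbit has exactly one representative with [c] in the half-open cube; if [r] is
   the lattice vector bringing [c] there, then [mu^-r v mod L] is a fibre coordinate,
   which trivializes the projection with fibre [E / L = T^k]. The lift
   [t |-> [exp_point (t e_i), mu_i v]] of the [i]-th loop runs from the fibre inclusion
   twisted by [mu_i] to the fibre inclusion itself, so the monodromy is [mu_i]; and
   [b |-> [exp_point c, 0]], for any lift [c] of [b], is a well-defined section because
   [0] is fixed by every [mu_i]. *)

From HB Require Import structures.
From Stdlib Require Import Relation_Operators.
From mathcomp Require Import all_boot all_order all_algebra.
From mathcomp Require Import all_classical all_reals all_analysis.
From mathcomp Require Import lra zify.

Set Implicit Arguments.
Unset Strict Implicit.
Unset Printing Implicit Defensive.
Import Order.TTheory GRing.Theory Num.Theory.
Import numFieldNormedType.Exports.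
Local Open Scope classical_set_scope.
Local Open Scope ring_scope.

Lemma big_mul_factor (T : pzSemiRingType) (I : eqType) (r : seq I) (F G : I -> T) a i :
  uniq r -> (forall j, j != i -> G j = F j) -> G i = a * F i ->
  (forall j, GRing.comm a (F j)) ->
  \prod_(j <- r) G j = if i \in r then a * \prod_(j <- r) F j else \prod_(j <- r) F j.
Proof.
move=> + GF Gi aF; elim: r => [|x r IH] /=; first by rewrite !big_nil.
case/andP=> xr ur; rewrite !big_cons in_cons IH //.
have [eix|ix] := eqVneq i x; first by subst x; rewrite /= (negbTE xr) Gi mulrA.
rewrite GF 1?eq_sym //; case: ifP => // _.
by rewrite !mulrA (aF x).
Qed.

Section IntegerPowers.
Variables (R : comUnitRingType) (k : nat).
Implicit Types (A B M : 'M[R]_k) (z : int).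

Definition mxpowz M z : 'M[R]_k :=
  if 0 <= z then M ^+ `|z|%N else invmx M ^+ `|z|%N.

Lemma mxpowz0 M : mxpowz M 0 = 1.
Proof. by rewrite /mxpowz /= expr0. Qed.

Lemma mxpowzS M z : M \in unitmx -> mxpowz M (z + 1) = M * mxpowz M z.
Proof.
move=> Mu; have MV : M * invmx M = 1 by rewrite -mulmxE mulmxV.
case: z => [n|[|n]].
- by rewrite -PoszD addn1 /mxpowz /= exprS.
- by rewrite /mxpowz /= expr0 expr1 MV.
- have -> : Negz n.+1 + 1 = Negz n by rewrite !NegzE -addn1 PoszD opprD addrK.
  by rewrite /mxpowz /= [invmx M ^+ n.+2]exprS mulrA MV mul1r.
Qed.

Lemma commr_invmx A B : B \in unitmx -> GRing.comm A B -> GRing.comm A (invmx B).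
Proof.
move=> Bu AB; have VB : invmx B * B = 1 by rewrite -mulmxE mulVmx.
have BV : B * invmx B = 1 by rewrite -mulmxE mulmxV.
have : invmx B * (A * B) * invmx B = invmx B * (B * A) * invmx B by rewrite AB.
by rewrite !mulrA VB mul1r -!mulrA BV mulr1.
Qed.

Lemma commr_mxpowz A B z : B \in unitmx -> GRing.comm A B ->
  GRing.comm A (mxpowz B z).
Proof.
move=> Bu AB; rewrite /mxpowz; case: ifP => _; apply: commrX => //.
exact: commr_invmx.
Qed.

Variables (s : nat) (mu : 'I_s -> 'M[R]_k).
Hypothesis mu_unit : forall i, mu i \in unitmx.
Hypothesis mu_comm : forall i j, GRing.comm (mu i) (mu j).

Definition mxpowz_prod (n : 'cV[int]_s) : 'M[R]_k :=
  \prod_(i < s) mxpowz (mu i) (n i 0).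

Lemma mxpowz_prod0 : mxpowz_prod 0 = 1.
Proof. by rewrite /mxpowz_prod big1 // => i _; rewrite mxE mxpowz0. Qed.

Lemma commr_mxpowz_prod i n : GRing.comm (mu i) (mxpowz_prod n).
Proof. by apply: commr_prod => j _; apply: commr_mxpowz. Qed.

Lemma mxpowz_prodDdelta n i : mxpowz_prod (n + delta_mx i 0) = mu i * mxpowz_prod n.
Proof.
rewrite /mxpowz_prod.
rewrite (@big_mul_factor _ _ _ (fun j => mxpowz (mu j) (n j 0)) _ (mu i) i).
- by rewrite mem_index_enum.
- exact: index_enum_uniq.
- by move=> j ji; rewrite !mxE (negbTE ji) addr0.
- by rewrite !mxE !eqxx mxpowzS.
- by move=> j; apply: commr_mxpowz.
Qed.

End IntegerPowers.

Lemma int_col_ind s (P : 'cV[int]_s -> Prop) : P 0 ->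
  (forall n i, P n -> P (n + delta_mx i 0)) ->
  (forall n i, P n -> P (n - delta_mx i 0)) -> forall n, P n.
Proof.
move=> P0 PS PP n; rewrite [n]matrix_sum_delta.
elim: (index_enum _) => [|i r IH]; first by rewrite big_nil.
rewrite big_cons big_ord1 addrC.
have PZ (m : 'cV[int]_s) (z : int) : P m -> P (m + z *: delta_mx i 0).
  move=> Pm; case: z => [j|j].
    elim: j => [|j IHj]; first by rewrite scale0r addr0.
    by rewrite -[j.+1]addn1 PoszD scalerDl scale1r addrA; apply: PS.
  rewrite NegzE; elim: j => [|j IHj]; first by rewrite scaleN1r; apply: PP.
  by rewrite -[j.+2]addn1 PoszD opprD scalerDl scaleN1r addrA; apply: PP.
exact: PZ.
Qed.

Section IntMatrices.
Variable R : realType.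

Lemma intmxM m n p (A : 'M[int]_(m, n)) (B : 'M[int]_(n, p)) :
  intmx (A *m B) = intmx A *m intmx B :> 'M[R]_(m, p).
Proof. exact: map_mxM. Qed.

Lemma intmxD m n (A B : 'M[int]_(m, n)) :
  intmx (A + B) = intmx A + intmx B :> 'M[R]_(m, n).
Proof. exact: map_mxD. Qed.

Lemma intmxN m n (A : 'M[int]_(m, n)) : intmx (- A) = - intmx A :> 'M[R]_(m, n).
Proof. exact: map_mxN. Qed.

Lemma intmx0 m n : intmx 0 = 0 :> 'M[R]_(m, n).
Proof. exact: map_mx0. Qed.

Lemma intmx1 n : intmx 1%:M = 1%:M :> 'M[R]_n.
Proof. exact: map_mx1. Qed.

Lemma intmx_delta m n (i : 'I_m) (j : 'I_n) :
  intmx (delta_mx i j) = delta_mx i j :> 'M[R]_(m, n).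
Proof. by apply/matrixP => a b; rewrite !mxE; case: (_ && _). Qed.

End IntMatrices.

Lemma mx_continuous_at (R : realType) (T : topologicalType) m n
    (f : T -> 'M[R]_(m, n)) t :
  (forall i j, {for t, continuous (fun x => f x i j)}) -> {for t, continuous f}.
Proof.
move=> fc A [P PM PA]; apply: (filterS (fun x Px => PA (f x) Px)).
by apply: filter_forall => i; apply: filter_forall => j; exact: fc.
Qed.

Lemma map_mx_continuous_at (R : realType) m n (f : R -> R) (M : 'M[R]_(m, n)) :
  (forall i j, {for M i j, continuous f}) -> {for M, continuous (map_mx f)}.
Proof.
move=> fc; apply: mx_continuous_at => i j.
have -> : (fun N => map_mx f N i j) = f \o (fun N => N i j).
  by apply: funext => N; rewrite mxE.
by apply: continuous_comp; [exact: coord_continuous | exact: fc].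
Qed.

Lemma mulmx_continuous (R : realType) m n p (A : 'M[R]_(m, n)) :
  continuous (fun B : 'M[R]_(n, p) => A *m B).
Proof.
move=> B; apply: mx_continuous_at => i j.
have -> : (fun C => (A *m C) i j) = (fun C => \sum_l A i l * C l j).
  by apply: funext => C; rewrite mxE.
apply: (cvg_big add_continuous (nbhs_filter B)) => l _.
by apply: cvgM; [exact: cvg_cst | exact: coord_continuous].
Qed.

Lemma continuous_fst (T U : topologicalType) : continuous (@fst T U).
Proof. by move=> z; apply: cvg_fst. Qed.

Lemma continuous_snd (T U : topologicalType) : continuous (@snd T U).
Proof. by move=> z; apply: cvg_snd. Qed.

Lemma continuous_at_near_eq (T U : topologicalType) (f g : T -> U) x (N : set T) :
  nbhs x N -> (forall y, N y -> f y = g y) -> {for x, continuous g} ->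
  {for x, continuous f}.
Proof.
move=> Nx fg gx; rewrite /prop_for /continuous_at (fg x (nbhs_singleton Nx)).
apply: cvg_trans gx; apply: near_eq_cvg; apply: filterS Nx => y Ny.
exact/esym/fg.
Qed.

Lemma within_continuous_map_fst (T1 T2 Z : topologicalType) (S : set T1) (a : T1 -> Z) :
  {within S, continuous a} ->
  {within S `*` setT, continuous (fun z : T1 * T2 => (a z.1, z.2))}.
Proof.
move=> a_cont; apply/continuous_subspace_prodP => x Sx.
have fst_cont : {for x, continuous (fst : subspace S * subspace [set: T2] -> subspace S)}.
  exact: cvg_fst.
have snd_cont : {for x, continuous (fun z : subspace S * subspace [set: T2] => z.2 : T2)}.
  move=> A Ax; apply: (@cvg_snd _ (subspace [set: T2])).
  by rewrite /= nbhs_subspaceT.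
have a1_cont := @continuous_comp (subspace S * subspace [set: T2])%type (subspace S) Z
  fst (a : subspace S -> Z) x fst_cont (a_cont x.1).
exact: cvg_pair a1_cont snd_cont.
Qed.

Section QuotientMaps.
Variables (X Y : topologicalType) (D : set X) (rel : X -> X -> Prop) (q : X -> Y).
Hypotheses (q_quot : is_quotient_map D rel q) (D_open : open D).

Lemma quotient_map_continuous_at x : D x -> {for x, continuous q}.
Proof.
move=> Dx A; rewrite nbhsE => -[B [B_open Bqx] BA].
have [_ _ /(_ B) [/(_ B_open) [V [V_open DqB]] _]] := q_quot.
have : nbhs x (D `&` V).
  by move: (openI D_open V_open); rewrite openE; apply; rewrite -DqB.
by apply: filterS => y; rewrite -DqB => -[_ /BA].
Qed.

Lemma quotient_map_within_continuous (Z : topologicalType) (A : set Y) (F : Y -> Z) :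
  open A -> (forall x, D x -> A (q x) -> {for x, continuous (F \o q)}) ->
  {within A, continuous F}.
Proof.
move=> A_open Fq; rewrite continuous_open_subspace //.
apply/continuous_inP => // O O_open.
have [_ _ q_open] := q_quot; apply/q_open.
have [V0 [V0_open DqA]] := (q_open A).1 A_open.
have DqA_open : open (D `&` q @^-1` A) by rewrite DqA; apply: openI.
have : {in D `&` q @^-1` A, continuous (F \o q)}.
  by move=> x /set_mem [Dx Ax]; apply: Fq.
move=> /(continuous_inP _ DqA_open) /(_ O O_open) FqO_open.
exists (D `&` q @^-1` A `&` (F \o q) @^-1` O); split => //.
by apply/seteqP; split => x /= [Dx [Ax Ox]] //; do ! split => //; case: Ax.
Qed.

End QuotientMaps.

Section Cubes.
Variables (R : realType) (s : nat).
Implicit Types (l : 'cV[int]_s).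

Definition half_open_cube (c0 c : 'cV[R]_s) :=
  forall j, c0 j 0 - 2^-1 <= c j 0 < c0 j 0 + 2^-1.

Definition open_cube (c0 c : 'cV[R]_s) :=
  forall j, c0 j 0 - 2^-1 < c j 0 < c0 j 0 + 2^-1.

Definition round_to_cube (c0 c : 'cV[R]_s) : 'cV[int]_s :=
  \col_j Num.floor (c j 0 - c0 j 0 + 2^-1).

Lemma open_cube_half_open (c0 c : 'cV[R]_s) : open_cube c0 c -> half_open_cube c0 c.
Proof. by move=> cc0 j; have /andP [h1 ->] := cc0 j; rewrite ltW. Qed.

Lemma open_cube_center (c0 : 'cV[R]_s) : open_cube c0 c0.
Proof.
have h_gt0 : (0 : R) < 2^-1 by rewrite invr_gt0 ltr0n.
by move=> j; apply/andP; split; lra.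
Qed.

Lemma open_cube_open (c0 : 'cV[R]_s) : open (open_cube c0).
Proof.
rewrite openE => c cc0.
apply: (@filter_forall _ _ (fun j (d : 'cV[R]_s) =>
  c0 j 0 - 2^-1 < d j 0 < c0 j 0 + 2^-1) _ (nbhs_filter c)) => j.
have itv_open : open [set x : R | c0 j 0 - 2^-1 < x < c0 j 0 + 2^-1].
  rewrite (_ : [set x | _] = [set x | c0 j 0 - 2^-1 < x] `&` [set x | x < c0 j 0 + 2^-1]).
    exact: openI (@open_gt R _) (@open_lt R _).
  by apply/seteqP; split => x /= => [/andP [] | []] -> ->.
apply: (@coord_continuous R s 1 j 0 c [set x | c0 j 0 - 2^-1 < x < c0 j 0 + 2^-1]).
by move: itv_open; rewrite openE; apply; exact: cc0.
Qed.

Lemma half_open_cube_lattice_eq0 (c0 c : 'cV[R]_s) l :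
  half_open_cube c0 c -> half_open_cube c0 (c + intmx l) -> l = 0.
Proof.
move=> cc0 clc0; apply/matrixP => j a; rewrite ord1 mxE.
have := cc0 j; have := clc0 j; rewrite !mxE => /andP [l1 l2] /andP [c1 c2].
have : (l j 0)%:~R < 1%:~R :> R by lra.
have : (-1)%:~R < (l j 0)%:~R :> R by rewrite mulrNz; lra.
by rewrite !ltr_int; lia.
Qed.

Lemma round_to_cubeP (c0 c : 'cV[R]_s) :
  half_open_cube c0 (c - intmx (round_to_cube c0 c)).
Proof.
move=> j; rewrite !mxE.
have /andP [h1 h2] := floor_itv (c j 0 - c0 j 0 + 2^-1).
by rewrite intrD in h2; apply/andP; split; lra.
Qed.

Lemma round_to_cube_eq (c0 c : 'cV[R]_s) l :
  half_open_cube c0 (c - intmx l) -> round_to_cube c0 c = l.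
Proof.
move=> clc0; apply/matrixP => j a; rewrite ord1 mxE; apply: floor_def.
by have := clc0 j; rewrite !mxE intrD => /andP [h1 h2]; apply/andP; split; lra.
Qed.

Lemma round_to_cubeD (c0 c : 'cV[R]_s) l :
  round_to_cube c0 (c + intmx l) = round_to_cube c0 c + l.
Proof.
apply: round_to_cube_eq; rewrite intmxD opprD addrACA subrr addr0.
exact: round_to_cubeP.
Qed.

Lemma round_to_cube0 (c0 c : 'cV[R]_s) : half_open_cube c0 c -> round_to_cube c0 c = 0.
Proof. by move=> cc0; apply: round_to_cube_eq; rewrite intmx0 subr0. Qed.

End Cubes.

Section LatticeQuotient.
Variables (R : realType) (n : nat) (T : topologicalType) (pr : 'cV[R]_n -> T).
Hypothesis pr_quot : is_quotient_map [set: 'cV[R]_n] (@lattice_rel R n) pr.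

Lemma lattice_quotD x l : pr (x + intmx l) = pr x.
Proof. by case: pr_quot => _ pr_eq _; symmetry; apply/pr_eq => //; exists l. Qed.

Lemma lattice_quot_eq x y : pr x = pr y -> exists l, y = x + intmx l.
Proof. by case: pr_quot => _ pr_eq _ /pr_eq; apply. Qed.

Lemma lattice_quot_rep : {rep : T -> 'cV[R]_n | cancel rep pr}.
Proof.
have [pr_surj _ _] := pr_quot; have [rep repP] := choice pr_surj.
by exists rep => t; case: (repP t).
Qed.

Lemma continuous_lattice_quot : continuous pr.
Proof.
have [_ _ pr_open] := pr_quot; apply/continuousP => A A_open.
by have [V [V_open]] := (pr_open A).1 A_open; rewrite !setTI => ->.
Qed.

(* The saturation of [A] is the union of its lattice translates. *)
Lemma lattice_quot_open (A : set 'cV[R]_n) : open A -> open (pr @` A).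
Proof.
move=> A_open; have [_ _ pr_open] := pr_quot; apply/pr_open.
exists (\bigcup_(l in [set: 'cV[int]_n]) ((fun x => x + intmx l) @^-1` A)); split.
  apply: bigcup_open => l _; apply: open_comp => // x _.
  exact: cvgD cvg_id (cvg_cst _).
rewrite !setTI; apply/seteqP; split => x /=.
  by move=> [a Aa /lattice_quot_eq [l ->]]; exists (- l) => //=; rewrite intmxN addrK.
by move=> [l _ /= Axl]; exists (x + intmx l) => //; rewrite lattice_quotD.
Qed.

Lemma open_prod_lattice_quot (T1 : topologicalType) (V : set (T1 * 'cV[R]_n)) :
  open V -> open ((fun z => (z.1, pr z.2)) @` V).
Proof.
move=> V_open; rewrite openE => _ [[t w] Vtw <-] /=.
have [[A B] /= [At Bw] ABV] : nbhs (t, w) V by move: V_open; rewrite openE; apply.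
have prB_open : open (pr @` B°) by apply: lattice_quot_open; exact: open_interior.
exists (A, pr @` B°) => /=.
  by split => //; move: prB_open; rewrite openE; apply; exists w.
move=> [a f] /= [Aa [b Bb <-]]; exists (a, b) => //.
by apply: ABV; split => //=; exact: interior_subset.
Qed.

Variables (rep : T -> 'cV[R]_n).
Hypothesis repK : cancel rep pr.

Lemma lattice_descent_continuous (Z : topologicalType) (F : 'cV[R]_n -> Z) :
  continuous F -> (forall x l, F (x + intmx l) = F x) -> continuous (F \o rep).
Proof.
move=> F_cont F_inv; apply/continuousP => O O_open.
have -> : (F \o rep) @^-1` O = pr @` (F @^-1` O).
  apply/seteqP; split => t /=; first by move=> Ot; exists (rep t); rewrite ?repK.
  by move=> [a Oa <-]; have [l ->] := lattice_quot_eq (esym (repK (pr a))); rewrite F_inv.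
by apply: lattice_quot_open; exact: (proj1 (continuousP _) F_cont).
Qed.

Lemma lattice_descent_within_continuous (T1 Z : topologicalType) (S : set T1)
    (G : T1 * 'cV[R]_n -> Z) :
  {within S `*` setT, continuous G} ->
  (forall t x l, G (t, x + intmx l) = G (t, x)) ->
  {within S `*` setT, continuous (fun z : T1 * T => G (z.1, rep z.2))}.
Proof.
move=> /continuousP G_cont G_inv; apply/continuousP => O O_open.
have /open_subspaceP [V V_open GV] := G_cont O O_open; apply/open_subspaceP.
exists ((fun z => (z.1, pr z.2)) @` V); first exact: open_prod_lattice_quot.
apply/seteqP; split => -[t f] /= [Vtf [St _]]; split => //.
  move: Vtf St => [[t' w] Vtw [<- <-]] St.
  have : (V `&` S `*` setT) (t', w) by [].
  rewrite GV => -[/= GO _]; rewrite /from_subspace /=.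
  by have [l ->] := lattice_quot_eq (esym (repK (pr w))); rewrite G_inv.
have : ((from_subspace (S `*` setT) G) @^-1` O `&` S `*` setT) (t, rep f) by [].
by rewrite -GV => -[Vt _]; exists (t, rep f); rewrite //= repK.
Qed.

Definition cube_lift c0 (b : T) : 'cV[R]_n := rep b - intmx (round_to_cube c0 (rep b)).

Lemma cube_liftP c0 b : half_open_cube c0 (cube_lift c0 b).
Proof. exact: round_to_cubeP. Qed.

Lemma cube_liftK c0 b : pr (cube_lift c0 b) = b.
Proof. by rewrite /cube_lift -intmxN lattice_quotD repK. Qed.

Lemma cube_lift_quot c0 c : half_open_cube c0 c -> cube_lift c0 (pr c) = c.
Proof.
move=> cc0; have /lattice_quot_eq [l el] : pr c = pr (cube_lift c0 (pr c)).
  by rewrite cube_liftK.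
have := cube_liftP c0 (pr c); rewrite el => cl.
by rewrite (half_open_cube_lattice_eq0 cc0 cl) intmx0 addr0.
Qed.

Lemma cube_lift_continuous c0 : {within pr @` open_cube c0, continuous (cube_lift c0)}.
Proof.
apply/continuousP => O O_open; apply/open_subspaceP.
exists (pr @` (O `&` open_cube c0)).
  by apply: lattice_quot_open; apply: openI => //; exact: open_cube_open.
apply/seteqP; split => b /= [Ob bc0]; split => //.
  move: Ob => [c [Oc cc0] <-]; rewrite /from_subspace /=.
  by rewrite (cube_lift_quot (open_cube_half_open cc0)).
move: bc0 Ob => [c cc0 <-]; rewrite /from_subspace /=.
by rewrite (cube_lift_quot (open_cube_half_open cc0)); exists c.
Qed.

End LatticeQuotient.

Section Coordinates.
Variables (R : realType) (s : nat) (xi : 'I_s -> 'I_s -> R).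

Definition log_mx : 'M[R]_s := (\matrix_(i, j) ln (xi i j))^T.

Definition exp_point (c : 'cV[R]_s) : 'cV[R]_s := map_mx (@expR R) (log_mx *m c).

Definition log_coord (x : 'cV[R]_s) : 'cV[R]_s := invmx log_mx *m map_mx (@ln R) x.

Lemma exp_point_gt0 (c : 'cV[R]_s) j : 0 < exp_point c j 0.
Proof. by rewrite mxE expR_gt0. Qed.

Lemma continuous_exp_point : continuous exp_point.
Proof.
move=> c; apply: continuous_comp; first exact: mulmx_continuous.
by apply: map_mx_continuous_at => i j; exact: continuous_expR.
Qed.

Lemma log_coord_continuous_at (x : 'cV[R]_s) :
  (forall j, 0 < x j 0) -> {for x, continuous log_coord}.
Proof.
move=> x_gt0; apply: continuous_comp; last exact: mulmx_continuous.
by apply: map_mx_continuous_at => j a; rewrite ord1; exact: continuous_ln.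
Qed.

Hypothesis log_mx_unit : log_mx \in unitmx.

Lemma exp_pointK : cancel exp_point log_coord.
Proof.
move=> c; rewrite /log_coord; have -> : map_mx (@ln R) (exp_point c) = log_mx *m c.
  by apply/matrixP => i j; rewrite !mxE expRK.
by rewrite mulmxA mulVmx // mul1mx.
Qed.

Lemma log_coordK (x : 'cV[R]_s) : (forall j, 0 < x j 0) -> exp_point (log_coord x) = x.
Proof.
move=> x_gt0; rewrite /exp_point /log_coord mulmxA mulmxV // mul1mx.
by apply/matrixP => i j; rewrite !mxE ord1 lnK // posrE.
Qed.

Hypothesis xi_gt0 : forall i j, 0 < xi i j.

Lemma tau_exp_point k (mu : 'I_s -> 'M[int]_k) i c w :
  tau xi mu i (exp_point c, w) = (exp_point (c + delta_mx i 0), intmx (mu i) *m w).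
Proof.
congr (_, _); apply/matrixP => j a; rewrite ord1 /exp_point mulmxDr -colE !mxE.
by rewrite expRD lnK ?posrE // mulrC.
Qed.

Lemma log_coord_tau k (mu : 'I_s -> 'M[int]_k) i (x : 'cV[R]_s) (v : 'cV[R]_k) :
  (forall j, 0 < x j 0) -> log_coord (tau xi mu i (x, v)).1 = log_coord x + delta_mx i 0.
Proof. by move=> x_gt0; rewrite -{1}(log_coordK x_gt0) tau_exp_point exp_pointK. Qed.

End Coordinates.

Section Orbits.
Variables (R : realType) (s k : nat) (xi : 'I_s -> 'I_s -> R) (mu : 'I_s -> 'M[int]_k).
Hypothesis xi_gt0 : forall i j, 0 < xi i j.
Local Notation D := (@pos_part R s k).

Lemma gen_step_pos_part z z' : gen_step xi mu z z' -> D z <-> D z'.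
Proof.
case=> [[i ->]|[l ->]] //; rewrite /pos_part /=.
by split=> z_gt0 j; have := z_gt0 j; rewrite mxE pmulr_rgt0.
Qed.

Lemma orbit_rel_invariant (Z : Type) (f : 'cV[R]_s * 'cV[R]_k -> Z) :
    (forall z z', D z -> gen_step xi mu z z' -> f z' = f z) ->
  forall z z', G_orbit_rel xi mu z z' -> D z -> f z' = f z.
Proof.
move=> f_inv z z' zz'; suff [] : (D z <-> D z') /\ (D z -> f z' = f z) by [].
elim: zz' => {z z'} [z z' st|z|z z' _ [Dzz' fzz']|z1 z2 z3 _ [D12 f12] _ [D23 f23]].
- by split=> [|Dz]; [exact: gen_step_pos_part | exact: f_inv Dz st].
- by [].
- by split=> [|/Dzz' Dz]; [split=> /Dzz' | rewrite fzz'].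
- split; first by split=> [/D12/D23|/D23/D12].
  by move=> D1; rewrite f23 ?f12 //; apply/D12.
Qed.

Hypothesis mu_unit : forall i, mu i \in unitmx.
Hypothesis mu_comm : forall i j, GRing.comm (mu i) (mu j).

Lemma orbit_rel_shift n c w :
  G_orbit_rel xi mu (exp_point xi c, w)
    (exp_point xi (c + intmx n), intmx (mxpowz_prod mu n) *m w).
Proof.
elim/int_col_ind: n c w => [|n i IH|n i IH] c w.
- by rewrite intmx0 addr0 mxpowz_prod0 intmx1 mul1mx; exact: rst_refl.
- apply: rst_trans (IH c w) _; apply: rst_step; left; exists i.
  rewrite tau_exp_point // intmxD intmx_delta addrA.
  by rewrite mxpowz_prodDdelta // -mulmxE intmxM mulmxA.
- apply: rst_trans (IH c w) _; apply: rst_sym; apply: rst_step; left; exists i.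
  move: (n - delta_mx i 0) (subrK (delta_mx i 0) n) => m <-.
  rewrite tau_exp_point // intmxD intmx_delta addrA.
  by rewrite mxpowz_prodDdelta // -mulmxE intmxM mulmxA.
Qed.

End Orbits.

Lemma open_pos_part (R : realType) s k : open (@pos_part R s k).
Proof.
rewrite openE => z z_gt0.
apply: (@filter_forall _ _ (fun j (y : 'cV[R]_s * 'cV[R]_k) => 0 < y.1 j 0) _
  (nbhs_filter z)) => j.
have j_cont : {for z, continuous (fun y : 'cV[R]_s * 'cV[R]_k => y.1 j 0)}.
  exact: continuous_comp (@continuous_fst _ _ z) (@coord_continuous _ _ _ j 0 z.1).
exact: (j_cont [set x : R | 0 < x] (@open_gt R 0 _ (z_gt0 j))).
Qed.

Section TwistedQuotient.
Variables (R : realType) (s k : nat) (xi : 'I_s -> 'I_s -> R) (mu : 'I_s -> 'M[int]_k).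
Hypotheses (xi_gt0 : forall i j, 0 < xi i j) (log_mx_unit : log_mx xi \in unitmx).
Hypotheses (mu_unit : forall i, mu i \in unitmx)
  (mu_comm : forall i j, GRing.comm (mu i) (mu j)).
Local Notation D := (@pos_part R s k).

Variables (Y : topologicalType) (q : 'cV[R]_s * 'cV[R]_k -> Y).
Hypothesis q_quot : is_quotient_map D (G_orbit_rel xi mu) q.
Variables (Ts : topologicalType) (pis : 'cV[R]_s -> Ts).
Hypothesis pis_quot : is_quotient_map [set: 'cV[R]_s] (@lattice_rel R s) pis.
Variables (Tk : topologicalType) (pik : 'cV[R]_k -> Tk).
Hypothesis pik_quot : is_quotient_map [set: 'cV[R]_k] (@lattice_rel R k) pik.
Variables (repq : Y -> 'cV[R]_s * 'cV[R]_k) (reps : Ts -> 'cV[R]_s)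
  (repk : Tk -> 'cV[R]_k).
Hypotheses (repqP : forall y, D (repq y) /\ q (repq y) = y)
  (repsK : cancel reps pis) (repkK : cancel repk pik).

Lemma pos_part_exp_point c w : D (exp_point xi c, w).
Proof. by move=> j; exact: exp_point_gt0. Qed.

Lemma q_exp_point_eq c w c' w' :
  G_orbit_rel xi mu (exp_point xi c, w) (exp_point xi c', w') ->
  q (exp_point xi c, w) = q (exp_point xi c', w').
Proof.
have [_ q_eq _] := q_quot.
by move=> rel_cw; apply/q_eq => //; exact: pos_part_exp_point.
Qed.

Lemma q_latticeD c w l : q (exp_point xi c, w + intmx l) = q (exp_point xi c, w).
Proof.
apply: q_exp_point_eq.
by apply: rst_step; right; exists (- l); rewrite /= intmxN addrK.
Qed.

Lemma q_shift n c w :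
  q (exp_point xi c, w) = q (exp_point xi (c + intmx n), intmx (mxpowz_prod mu n) *m w).
Proof. by apply: q_exp_point_eq; exact: orbit_rel_shift. Qed.

Lemma q_tau i w :
  q (exp_point xi (delta_mx i 0), intmx (mu i) *m w) = q (exp_point xi 0, w).
Proof.
apply: q_exp_point_eq.
by apply: rst_sym; apply: rst_step; left; exists i; rewrite tau_exp_point // add0r.
Qed.

Lemma continuous_q_exp_point (T : topologicalType)
    (a : T -> 'cV[R]_s) (b : T -> 'cV[R]_k) :
  continuous a -> continuous b -> continuous (fun t => q (exp_point xi (a t), b t)).
Proof.
move=> a_cont b_cont t; apply: continuous_comp (quotient_map_continuous_at q_quot
  (@open_pos_part R s k) (pos_part_exp_point _ _)).
exact: cvg_pair (continuous_comp (a_cont t) (@continuous_exp_point _ _ xi _)) (b_cont t).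
Qed.

Lemma repq_invariant (Z : Type) (f : 'cV[R]_s * 'cV[R]_k -> Z) :
  (forall z z', D z -> gen_step xi mu z z' -> f z' = f z) ->
  forall z, D z -> f (repq (q z)) = f z.
Proof.
move=> f_inv z Dz; have [Drz qrz] := repqP (q z); case: q_quot => _ q_eq _.
by apply: (orbit_rel_invariant xi_gt0 f_inv) => //; apply/q_eq.
Qed.

Definition bproj (y : Y) : Ts := pis (log_coord xi (repq y).1).

Lemma bproj_q z : D z -> bproj (q z) = pis (log_coord xi z.1).
Proof.
move=> Dz.
apply: (@repq_invariant _ (fun z : _ * 'cV[R]_k => pis (log_coord xi z.1)) _ z Dz).
move=> [x v] z' Dxv [[i ->]|[l ->]] //.
by rewrite log_coord_tau // -(@intmx_delta R s 1 i 0) (lattice_quotD pis_quot).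
Qed.

Lemma log_coord_fst_continuous_at z : D z ->
  {for z, continuous (fun y : 'cV[R]_s * 'cV[R]_k => log_coord xi y.1)}.
Proof.
move=> Dz; apply: (@continuous_comp _ _ _ fst (log_coord xi)).
  exact: continuous_fst.
exact: log_coord_continuous_at.
Qed.

Lemma continuous_bproj : continuous bproj.
Proof.
apply/continuous_subspace_setT.
apply: (quotient_map_within_continuous q_quot (@open_pos_part R s k) openT) => z Dz _.
have D_nbhs : nbhs z D by move: (@open_pos_part R s k); rewrite openE; apply.
apply: (continuous_at_near_eq D_nbhs bproj_q).
apply: (@continuous_comp _ _ _ (fun y : _ * 'cV[R]_k => log_coord xi y.1) pis).
  exact: log_coord_fst_continuous_at.
exact: continuous_lattice_quot.
Qed.

Definition fiber_coord (c0 : 'cV[R]_s) (z : 'cV[R]_s * 'cV[R]_k) : Tk :=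
  pik (intmx (mxpowz_prod mu (- round_to_cube c0 (log_coord xi z.1))) *m z.2).

Definition fiber_chart (c0 : 'cV[R]_s) (y : Y) : Tk := fiber_coord c0 (repq y).

Lemma fiber_chart_q c0 z : D z -> fiber_chart c0 (q z) = fiber_coord c0 z.
Proof.
rewrite /fiber_chart; apply: repq_invariant => -[x v] z' Dxv [[i ->]|[l ->]].
  rewrite /fiber_coord log_coord_tau // -(@intmx_delta R s 1 i 0) round_to_cubeD /=.
  rewrite mulmxA -intmxM.
  set r := round_to_cube c0 (log_coord xi x).
  rewrite mulmxE -(commr_mxpowz_prod mu_unit mu_comm) -mxpowz_prodDdelta //.
  by rewrite opprD subrK.
by rewrite /fiber_coord /= mulmxDr -intmxM (lattice_quotD pik_quot).
Qed.

Lemma bproj_exp_point c w : bproj (q (exp_point xi c, w)) = pis c.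
Proof. by rewrite bproj_q ?(exp_pointK log_mx_unit) //; exact: pos_part_exp_point. Qed.

Lemma fiber_chart_exp_point c0 c w :
  half_open_cube c0 c -> fiber_chart c0 (q (exp_point xi c, w)) = pik w.
Proof.
move=> cc0; rewrite fiber_chart_q; last exact: pos_part_exp_point.
rewrite /fiber_coord /= (exp_pointK log_mx_unit) round_to_cube0 //.
by rewrite oppr0 mxpowz_prod0 intmx1 mul1mx.
Qed.

Definition zero_section (b : Ts) : Y := q (exp_point xi (reps b), 0).

Lemma continuous_zero_section : continuous zero_section.
Proof.
apply: (lattice_descent_continuous pis_quot repsK (F := fun c => q (exp_point xi c, 0))).
  apply: (@continuous_q_exp_point _ id (fun _ => 0)) => [x|]; first exact: cvg_id.
  exact: cst_continuous.
by move=> x l; rewrite (q_shift l x 0) mulmx0.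
Qed.

Lemma zero_sectionK : cancel zero_section bproj.
Proof. by move=> b; rewrite bproj_exp_point. Qed.

Definition local_triv (c0 : 'cV[R]_s) (bf : Ts * Tk) : Y :=
  q (exp_point xi (cube_lift reps c0 bf.1), repk bf.2).

Lemma local_trivK c0 y : local_triv c0 (bproj y, fiber_chart c0 y) = y.
Proof.
have [] := repqP y; rewrite /local_triv /bproj /fiber_chart /fiber_coord /=.
case: (repq y) => x v /= Dxv <-.
set r := round_to_cube c0 (log_coord xi x).
rewrite -(lattice_quotD pis_quot _ (- r)) intmxN.
rewrite (cube_lift_quot pis_quot repsK (round_to_cubeP _ _)).
set f := pik (intmx (mxpowz_prod mu (- r)) *m v).
have [l ->] := lattice_quot_eq pik_quot (esym (repkK f)).
by rewrite q_latticeD -intmxN -q_shift log_coordK.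
Qed.

Lemma local_trivP c0 b f :
  bproj (local_triv c0 (b, f)) = b /\ fiber_chart c0 (local_triv c0 (b, f)) = f.
Proof.
rewrite bproj_exp_point fiber_chart_exp_point; last exact: cube_liftP.
by rewrite (cube_liftK pis_quot repsK) repkK.
Qed.

Lemma fiber_chart_continuous c0 :
  {within bproj @^-1` (pis @` open_cube c0), continuous (fiber_chart c0)}.
Proof.
have U_open : open (pis @` open_cube c0).
  by apply: (lattice_quot_open pis_quot); exact: open_cube_open.
apply: (quotient_map_within_continuous q_quot (@open_pos_part R s k)).
  exact: (proj1 (continuousP _) continuous_bproj _ U_open).
move=> z Dz [c cc0]; rewrite bproj_q // => /(lattice_quot_eq pis_quot) [l el].
pose N := D `&` [set y | open_cube c0 (log_coord xi y.1 - intmx l)].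
have N_nbhs : nbhs z N.
  apply: filterI; first by move: (@open_pos_part R s k); rewrite openE; apply.
  have shift_cont : {for z, continuous (fun y : 'cV[R]_s * 'cV[R]_k =>
      log_coord xi y.1 - intmx l)}.
    apply: (@continuous_comp _ _ _ (fun y : _ * 'cV[R]_k => log_coord xi y.1)
      (fun c => c - intmx l)); first exact: log_coord_fst_continuous_at.
    exact: cvgD cvg_id (cvg_cst _).
  apply: shift_cont; move: (@open_cube_open R s c0); rewrite openE; apply.
  by rewrite el addrK.
apply: (continuous_at_near_eq
  (g := fun y => pik (intmx (mxpowz_prod mu (- l)) *m y.2)) N_nbhs).
  move=> y [Dy yc0] /=; rewrite fiber_chart_q // /fiber_coord.
  by rewrite (round_to_cube_eq (open_cube_half_open yc0)).
apply: (@continuous_comp _ _ _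
  (fun y : _ * 'cV[R]_k => intmx (mxpowz_prod mu (- l)) *m y.2) pik).
  apply: (@continuous_comp _ _ _ snd (fun w => intmx (mxpowz_prod mu (- l)) *m w)).
    exact: continuous_snd.
  exact: mulmx_continuous.
exact: continuous_lattice_quot.
Qed.

Lemma local_triv_continuous c0 :
  {within (pis @` open_cube c0) `*` setT, continuous (local_triv c0)}.
Proof.
apply: (lattice_descent_within_continuous pik_quot repkK
  (G := fun bw => q (exp_point xi (cube_lift reps c0 bw.1), bw.2))); last first.
  by move=> t x l; rewrite q_latticeD.
apply: (@within_continuous_comp _ _ _ _
  (fun bw : Ts * 'cV[R]_k => ((exp_point xi \o cube_lift reps c0) bw.1, bw.2)) q).
  move=> _ /set_mem [bw _ <-].
  apply: (quotient_map_continuous_at q_quot (@open_pos_part R s k)).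
  exact: pos_part_exp_point.
apply: within_continuous_map_fst.
apply: (@within_continuous_comp _ _ _ _ (cube_lift reps c0) (exp_point xi)).
  by move=> x _; apply: continuous_exp_point.
exact: cube_lift_continuous.
Qed.

Lemma bproj_fiber_bundle : @fiber_bundle Ts Tk Y bproj.
Proof.
split; first exact: continuous_bproj.
split; first by move=> b; exists (zero_section b); rewrite zero_sectionK.
move=> b; exists (pis @` open_cube (reps b)); split.
- by apply: (lattice_quot_open pis_quot); exact: open_cube_open.
- by exists (reps b); rewrite ?repsK //; exact: open_cube_center.
- exists (fiber_chart (reps b)), (local_triv (reps b)); split.
  + exact: fiber_chart_continuous.
  + exact: local_triv_continuous.
  + by move=> y _; exact: local_trivK.
  + by move=> c f _; exact: local_trivP.
Qed.

Definition fiber_emb (f : Tk) : Y := q (exp_point xi 0, repk f).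

Lemma fiber_embE f : fiber_emb f = local_triv 0 (pis 0, f).
Proof.
have cube0 := open_cube_half_open (open_cube_center (0 : 'cV[R]_s)).
by rewrite /local_triv /= (cube_lift_quot pis_quot repsK cube0).
Qed.

Lemma bproj_fiber_identification :
  fiber_identification bproj (pis 0) fiber_emb (fiber_chart 0).
Proof.
split.
- apply: (lattice_descent_continuous pik_quot repkK
    (F := fun w => q (exp_point xi 0, w))).
    apply: (@continuous_q_exp_point _ (fun _ => 0) id) => [|x]; last exact: cvg_id.
    exact: cst_continuous.
  by move=> x l; rewrite q_latticeD.
- apply: (continuous_subspaceW _ (@fiber_chart_continuous 0)) => y /= ->.
  by exists 0 => //; exact: open_cube_center.
- by move=> f; rewrite fiber_embE; exact: local_trivP.
- by move=> y y0; rewrite fiber_embE -y0 local_trivK.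
Qed.

Definition torus_map (M : 'M[int]_k) (f : Tk) : Tk := pik (intmx M *m repk f).

Lemma torus_mapE M v : torus_map M (pik v) = pik (intmx M *m v).
Proof.
rewrite /torus_map; have [l ->] := lattice_quot_eq pik_quot (esym (repkK (pik v))).
by rewrite mulmxDr -intmxM (lattice_quotD pik_quot).
Qed.

Lemma continuous_torus_map M : continuous (torus_map M).
Proof.
apply: (lattice_descent_continuous pik_quot repkK (F := fun w => pik (intmx M *m w))).
  move=> w; apply: continuous_comp; first exact: mulmx_continuous.
  exact: continuous_lattice_quot.
by move=> x l; rewrite mulmxDr -intmxM (lattice_quotD pik_quot).
Qed.

Lemma bproj_monodromy i :
  has_monodromy bproj (std_loop pis i) fiber_emb (fiber_chart 0) (torus_map (mu i)).
Proof.
exists (fun tf : R * Tk =>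
  q (exp_point xi (tf.1 *: delta_mx i 0), intmx (mu i) *m repk tf.2)); split.
- apply: (lattice_descent_within_continuous pik_quot repkK
    (G := fun tw : R * 'cV[R]_k =>
      q (exp_point xi (tw.1 *: delta_mx i 0), intmx (mu i) *m tw.2))).
    apply: continuous_subspaceT; apply: continuous_q_exp_point.
      move=> tw; apply: (@continuous_comp _ _ _ fst (fun t : R => t *: delta_mx i 0)).
        exact: continuous_fst.
      exact: scalel_continuous.
    move=> tw; apply: (@continuous_comp _ _ _ snd (fun w => intmx (mu i) *m w)).
      exact: continuous_snd.
    exact: mulmx_continuous.
  by move=> t x l; rewrite mulmxDr -intmxM q_latticeD.
- by move=> t f _; rewrite bproj_exp_point.
- by move=> f; rewrite /= scale1r q_tau.
exists (fun tf : R * Tk => torus_map (mu i) tf.2); split => //.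
- apply: continuous_subspaceT => tf.
  apply: (@continuous_comp _ _ _ snd (torus_map (mu i))); first exact: continuous_snd.
  exact: continuous_torus_map.
- move=> f /=; rewrite scale0r fiber_chart_exp_point //.
  exact/open_cube_half_open/open_cube_center.
Qed.

Lemma twisted_quotient_fibration :
  exists p : Y -> Ts,
    (@fiber_bundle Ts Tk Y p /\
     exists (phi : Tk -> Y) (phiinv : Y -> Tk),
       fiber_identification p (pis 0) phi phiinv /\
       forall i : 'I_s, exists L : Tk -> Tk,
         (forall v : 'cV[R]_k, L (pik v) = pik (intmx (mu i) *m v)) /\
         has_monodromy p (std_loop pis i) phi phiinv L) /\
    (exists sigma : Ts -> Y, continuous sigma /\ forall b, p (sigma b) = b).
Proof.
exists bproj; split; last first.
  by exists zero_section; split; [exact: continuous_zero_section | exact: zero_sectionK].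
split; first exact: bproj_fiber_bundle.
exists fiber_emb, (fiber_chart 0); split; first exact: bproj_fiber_identification.
move=> i; exists (torus_map (mu i)).
by split; [exact: torus_mapE | exact: bproj_monodromy].
Qed.

End TwistedQuotient.

Theorem proposition2p5 (R : realType) (s k : nat)
    (xi : 'I_s -> 'I_s -> R) (mu : 'I_s -> 'M[int]_k)
    (Hxi : forall i j, 0 < xi i j)
    (Hmu : forall i, mu i \in unitmx)
    (Hcomm : forall i j, mu i *m mu j = mu j *m mu i)
    (Hnondeg : (\matrix_(i < s, j < s) ln (xi i j)) \in unitmx)
    (Y : topologicalType) (q : 'cV[R]_s * 'cV[R]_k -> Y)
    (Hq : is_quotient_map (@pos_part R s k) (G_orbit_rel xi mu) q)
    (Ts : topologicalType) (pis : 'cV[R]_s -> Ts)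
    (Hpis : is_quotient_map [set: 'cV[R]_s] (@lattice_rel R s) pis)
    (Tk : topologicalType) (pik : 'cV[R]_k -> Tk)
    (Hpik : is_quotient_map [set: 'cV[R]_k] (@lattice_rel R k) pik) :
  exists p : Y -> Ts,
    (@fiber_bundle Ts Tk Y p /\
     exists (phi : Tk -> Y) (phiinv : Y -> Tk),
       fiber_identification p (pis 0) phi phiinv /\
       forall i : 'I_s, exists L : Tk -> Tk,
         (forall v : 'cV[R]_k, L (pik v) = pik (intmx (mu i) *m v)) /\
         has_monodromy p (std_loop pis i) phi phiinv L) /\
    (exists sigma : Ts -> Y, continuous sigma /\ forall b, p (sigma b) = b).
Proof.
have log_mx_unit : log_mx xi \in unitmx by rewrite /log_mx unitmx_tr.
have mu_comm i j : GRing.comm (mu i) (mu j) by rewrite /GRing.comm -!mulmxE Hcomm.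
have [/choice [repq repqP] _ _] := Hq.
have [reps repsK] := lattice_quot_rep Hpis.
have [repk repkK] := lattice_quot_rep Hpik.
exact: (twisted_quotient_fibration Hxi log_mx_unit Hmu mu_comm Hq Hpis Hpik
  repqP repsK repkK).
Qed.
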